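(* Let $k,\ell\in\mathbb Z_{\ge1}$ with $k\ne\ell$, and $\lambda_1,\lambda_2\in\mathbb C$. Then $\widetilde{\mathrm{Sol}}_{(k,\ell)}(-\lambda_1,-\lambda_2)\neq\{0\}$ if and only if $(\lambda_1,\lambda_2)\in\{(1-k,1-\ell+k),(1-k+\ell,1-\ell)\}$. Moreover $\widetilde{\mathrm{Sol}}_{(k,\ell)}(-(1-k),-(1-\ell+k))=\mathbb C\,p_+^{(k,\ell)}(t)$ and $\widetilde{\mathrm{Sol}}_{(k,\ell)}(-(1-k+\ell),-(1-\ell))=\mathbb C\,p_-^{(k,\ell)}(t)$.
   Context: Let $\vartheta_t=t\frac d{dt}$. For $a,b,\mu\in\mathbb C$ define $D^{(a,b)}(\mu;t)=\frac d{dt}+(\mu+a-\frac b2-1)(a-\vartheta_t)+\frac14t(a-1-\vartheta_t)(a-\vartheta_t)(b-\vartheta_t)$, and $D^{(a,b)}(\mu;-t)=-\frac d{dt}+(\mu+a-\frac b2-1)(a-\vartheta_t)-\frac14t(a-1-\vartheta_t)(a-\vartheta_t)(b-\vartheta_t)$ (substitution $t\mapsto -t$). For $k,\ell\in\mathbb Z_{\ge0}$, $\widetilde{\mathrm{Sol}}_{(k,\ell)}(-\lambda_1,-\lambda_2)=\{p\in\mathbb C[t]:\deg p\le\min(k,\ell),\ D^{(k,\ell)}(\lambda_1;t)p=0,\ D^{(\ell,k)}(\lambda_2;-t)p=0\}$. Polynomials: $p_\pm^{(k,\ell)}(t)=\sum_{m=0}^{\min(k,\ell)}\frac{(\pm1)^m}{2^m}m!\binom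 km\binom\ell m t^m$. *)

From HB Require Import structures.
From mathcomp Require Import all_boot all_order all_algebra.
Set Implicit Arguments. Unset Strict Implicit. Unset Printing Implicit Defensive.
Import Order.TTheory GRing.Theory Num.Theory.
Local Open Scope ring_scope.

Section Ops.
Variable C : numClosedFieldType.

Definition theta (p : {poly C}) : {poly C} := 'X * p^`().

Definition amth (a : C) (p : {poly C}) : {poly C} := a *: p - theta p.

Definition Dplus (a b mu : C) (p : {poly C}) : {poly C} :=
  p^`() + (mu + a - b / 2%:R - 1) *: amth a p
  + (1 / 4%:R) *: ('X * amth (a - 1) (amth a (amth b p))).

(* D^{(a,b)}(mu; -t) *)
Definition Dminus (a b mu : C) (p : {poly C}) : {poly C} :=
  - p^`() + (mu + a - b / 2%:R - 1) *: amth a p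
  - (1 / 4%:R) *: ('X * amth (a - 1) (amth a (amth b p))).

Definition SolTilde (k l : nat) (lam1 lam2 : C) (p : {poly C}) : Prop :=
  (size p <= (minn k l).+1)%N /\
  Dplus k%:R l%:R lam1 p = 0 /\ Dminus l%:R k%:R lam2 p = 0.

(* p_{+/-}^{(k,l)} ; sgn = false gives p_+, sgn = true gives p_- *)
Definition ppm (sgn : bool) (k l : nat) : {poly C} :=
  \poly_(m < (minn k l).+1)
    ((-1) ^+ (sgn * m) / 2%:R ^+ m * (m`!)%:R * ('C(k, m))%:R * ('C(l, m))%:R).

End Ops.

(* Comparing coefficients, D^{(k,l)}(lam1; t) p = 0 and
   D^{(l,k)}(lam2; -t) p = 0 are three-term recursions whose leading terms
   (m+2) p_(m+2) cancel in the sum, leaving a two-term recursion between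
   p_(m+1) and p_m.  A nonzero solution has p_0 <> 0, since the first
   recursion alone determines p from p_0.  The equations in degrees 0 and 1
   then force the shifts lam1 + k - l/2 - 1 and lam2 + l - k/2 - 1 to be
   -+ l/2 and +- k/2, which gives the two special pairs; for them the
   two-term recursion is the one satisfied by the coefficients of p_+-, and
   since k <> l it determines p from p_0. *)

From HB Require Import structures.
From mathcomp Require Import all_boot all_order all_algebra.
From mathcomp Require Import ring.
Import Order.TTheory GRing.Theory Num.Theory.
Local Open Scope ring_scope.

Section SolTildeTheory.
Context {C : numClosedFieldType}.
Implicit Types (a b mu : C) (p : {poly C}) (k l m : nat) (sgn : bool).

Definition Dshift a b mu : C := mu + a - b / 2%:R - 1.

Lemma Dshift_inj a b : injective (Dshift a b).
Proof. by move=> x y /addIr /addIr /addIr. Qed.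

Lemma add1_natr_neq0 m : 1 + m%:R != 0 :> C.
Proof. by rewrite addrC natr1 pnatr_eq0. Qed.

Lemma add2_natr_neq0 m : 2%:R + m%:R != 0 :> C.
Proof. by rewrite -natrD pnatr_eq0. Qed.

Lemma coef_amth a p m : (amth a p)`_m = (a - m%:R) * p`_m.
Proof.
rewrite /amth /theta coefB coefZ coefXM.
case: m => [|m] /=; first by rewrite !subr0.
by rewrite coef_deriv mulrBl mulr_natl.
Qed.

Lemma coef0_Dplus a b mu p :
  (Dplus a b mu p)`_0 = p`_1 + Dshift a b mu * (a * p`_0).
Proof.
rewrite /Dplus !coefD coefZ coefZ coefXM coef_amth coef_deriv /=.
by rewrite subr0 mulr0 addr0 mulr1n.
Qed.

Lemma coefS_Dplus a b mu p m :
  (Dplus a b mu p)`_m.+1 = m.+2%:R * p`_m.+2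
   + Dshift a b mu * ((a - m.+1%:R) * p`_m.+1)
   + 1 / 4%:R * ((a - 1 - m%:R) * ((a - m%:R) * ((b - m%:R) * p`_m))).
Proof.
rewrite /Dplus !coefD coefZ coefZ coefXM coef_amth coef_deriv /=.
by rewrite !coef_amth mulr_natl.
Qed.

Lemma coef0_Dminus a b mu p :
  (Dminus a b mu p)`_0 = - p`_1 + Dshift a b mu * (a * p`_0).
Proof.
rewrite /Dminus !coefB coefD coefN coefZ coefZ coefXM coef_amth coef_deriv /=.
by rewrite subr0 mulr0 subr0 mulr1n.
Qed.

Lemma coefS_Dminus a b mu p m :
  (Dminus a b mu p)`_m.+1 = - (m.+2%:R * p`_m.+2)
   + Dshift a b mu * ((a - m.+1%:R) * p`_m.+1)
   - 1 / 4%:R * ((a - 1 - m%:R) * ((a - m%:R) * ((b - m%:R) * p`_m))).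
Proof.
rewrite /Dminus !coefB coefD coefN coefZ coefZ coefXM coef_amth coef_deriv /=.
by rewrite !coef_amth mulr_natl.
Qed.

Lemma kerDplus_coef0_eq0 a b mu p :
  Dplus a b mu p = 0 -> p`_0 = 0 -> p = 0.
Proof.
move=> hP p0; apply/polyP => i; rewrite coef0.
suff /(_ i) [] : forall j, p`_j = 0 /\ p`_j.+1 = 0 by [].
elim=> [|j [pj pj1]].
  by move: (congr1 (coefp 0) hP); rewrite /= coef0_Dplus coef0 p0 !mulr0 addr0.
split=> //; move: (congr1 (coefp j.+1) hP).
rewrite /= coefS_Dplus coef0 pj pj1 !mulr0 !addr0 => /eqP.
by rewrite mulf_eq0 pnatr_eq0 => /eqP.
Qed.

Section Solutions.
Context {k l : nat} {lam1 lam2 : C} {p : {poly C}}.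
Hypothesis solp : SolTilde k l lam1 lam2 p.

Lemma SolTilde_coef1 :
  p`_1 = Dshift l%:R k%:R lam2 * (l%:R * p`_0) /\
  (Dshift k%:R l%:R lam1 * k%:R + Dshift l%:R k%:R lam2 * l%:R) * p`_0 = 0.
Proof.
have [_ [hP hM]] := solp.
have e0M := congr1 (coefp 0) hM; rewrite /= coef0_Dminus coef0 in e0M.
split; first by move/eqP: e0M; rewrite addrC subr_eq0 => /eqP.
transitivity ((Dplus k%:R l%:R lam1 p)`_0 + (Dminus l%:R k%:R lam2 p)`_0).
  by rewrite coef0_Dplus coef0_Dminus; ring.
by rewrite hP hM coef0 addr0.
Qed.

Lemma SolTilde_coefS m :
  (Dshift k%:R l%:R lam1 * (k%:R - m.+1%:R)
     + Dshift l%:R k%:R lam2 * (l%:R - m.+1%:R)) * p`_m.+1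
  + (k%:R - m%:R) * (l%:R - m%:R) * (k%:R - l%:R) / 4%:R * p`_m = 0.
Proof.
have [_ [hP hM]] := solp.
transitivity ((Dplus k%:R l%:R lam1 p)`_m.+1 + (Dminus l%:R k%:R lam2 p)`_m.+1).
  by rewrite coefS_Dplus coefS_Dminus; ring.
by rewrite hP hM coef0 addr0.
Qed.

End Solutions.

Lemma coef_ppm sgn k l m :
  (ppm C sgn k l)`_m =
  (-1) ^+ (sgn * m) / 2%:R ^+ m * m`!%:R * 'C(k, m)%:R * 'C(l, m)%:R.
Proof.
rewrite coef_poly; case: ltnP => //; rewrite gtn_min.
by case/orP=> /bin_small ->; rewrite mulr0n ?mulr0 ?mul0r.
Qed.

Lemma coef0_ppm sgn k l : (ppm C sgn k l)`_0 = 1.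
Proof. by rewrite coef_ppm muln0 !expr0 !bin0 fact0 invr1 !mulr1. Qed.

Lemma ppm_neq0 sgn k l : ppm C sgn k l != 0.
Proof.
by apply: contra_neq (@oner_neq0 C) => h; rewrite -(coef0_ppm sgn k l) h coef0.
Qed.

Lemma natr_mul_bin_left k m :
  m.+1%:R * 'C(k, m.+1)%:R = (k%:R - m%:R) * 'C(k, m)%:R :> C.
Proof.
rewrite -natrM mul_bin_left natrM.
by case: (leqP m k) => [/natrB -> // | /bin_small ->]; rewrite !mulr0.
Qed.

Lemma coefS_ppm sgn k l m :
  (ppm C sgn k l)`_m.+1 =
  (-1) ^+ sgn * (k%:R - m%:R) * (l%:R - m%:R) / (2%:R * m.+1%:R)
  * (ppm C sgn k l)`_m.
Proof.
have h2 : 2%:R != 0 :> C by rewrite pnatr_eq0.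
rewrite !coef_ppm mulnSr exprD exprS factS natrM.
transitivity ((-1) ^+ (sgn * m) * (-1) ^+ sgn / (2%:R * 2%:R ^+ m)
  * m`!%:R / m.+1%:R * ((m.+1%:R * 'C(k, m.+1)%:R) * (m.+1%:R * 'C(l, m.+1)%:R))
  : C).
  by field; rewrite add1_natr_neq0 expf_neq0.
by rewrite !natr_mul_bin_left; field; rewrite add1_natr_neq0 expf_neq0.
Qed.

Definition special_lambda sgn k l : C * C :=
  if sgn then (1 - k%:R + l%:R, 1 - l%:R) else (1 - k%:R, 1 - l%:R + k%:R).

Lemma Dshift_special sgn k l :
  Dshift k%:R l%:R (special_lambda sgn k l).1
    = - ((-1) ^+ sgn * (l%:R / 2%:R)) /\
  Dshift l%:R k%:R (special_lambda sgn k l).2 = (-1) ^+ sgn * (k%:R / 2%:R).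
Proof.
by rewrite /Dshift; case: sgn; rewrite /= ?expr0 ?expr1; split; field.
Qed.

Lemma ppm_SolTilde sgn k l c :
  SolTilde k l (special_lambda sgn k l).1 (special_lambda sgn k l).2
    (c *: ppm C sgn k l).
Proof.
have [hA1 hA2] := Dshift_special sgn k l.
split; first by rewrite (leq_trans (size_scale_leq _ _)) // size_poly.
split; apply/polyP => -[|m];
  rewrite coef0 ?coef0_Dplus ?coefS_Dplus ?coef0_Dminus ?coefS_Dminus ?hA1 ?hA2;
  rewrite !coefZ !coefS_ppm ?coef0_ppm;
  case: sgn {hA1 hA2} => /=; rewrite ?expr0 ?expr1;
  by field; rewrite ?add1_natr_neq0 ?add2_natr_neq0.
Qed.

Lemma special_SolTilde_coefS {sgn k l p} : k != l ->
  SolTilde k l (special_lambda sgn k l).1 (special_lambda sgn k l).2 p ->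
  forall m, p`_m.+1 =
    (-1) ^+ sgn * (k%:R - m%:R) * (l%:R - m%:R) / (2%:R * m.+1%:R) * p`_m.
Proof.
move=> hkl hs m.
have hlk : l%:R - k%:R != 0 :> C by rewrite subr_eq0 eqr_nat eq_sym.
have hrec : (-1) ^+ sgn * (m.+1%:R * (l%:R - k%:R)) / 2%:R * p`_m.+1
    = - ((k%:R - m%:R) * (l%:R - m%:R) * (k%:R - l%:R) / 4%:R * p`_m).
  have := SolTilde_coefS hs m; have [-> ->] := Dshift_special sgn k l.
  by move/eqP; rewrite addr_eq0 => /eqP <-; ring.
apply: (@mulfI _ ((-1) ^+ sgn * (m.+1%:R * (l%:R - k%:R)) / 2%:R)).
  by rewrite !mulf_neq0 ?signr_eq0 ?invr_eq0 ?pnatr_eq0.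
by rewrite hrec; case: sgn {hs hrec}; rewrite /= ?expr0 ?expr1; field;
  rewrite add1_natr_neq0.
Qed.

Lemma SolTilde_specialE sgn k l p : k != l ->
  SolTilde k l (special_lambda sgn k l).1 (special_lambda sgn k l).2 p <->
  exists c, p = c *: ppm C sgn k l.
Proof.
move=> hkl; split=> [hs | [c ->]]; last exact: ppm_SolTilde.
exists p`_0; apply/polyP => i; rewrite coefZ.
elim: i => [|m IH]; first by rewrite coef0_ppm mulr1.
by rewrite (special_SolTilde_coefS hkl hs) IH coefS_ppm mulrCA.
Qed.

Lemma SolTilde_neq0_special {k l lam1 lam2 p} :
  (0 < k)%N -> (0 < l)%N -> k != l ->
  SolTilde k l lam1 lam2 p -> p != 0 ->
  exists sgn, (lam1, lam2) = special_lambda sgn k l.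
Proof.
move=> k_gt0 l_gt0 hkl hs pn0.
have hk : k%:R != 0 :> C by rewrite pnatr_eq0 -lt0n.
have hl : l%:R != 0 :> C by rewrite pnatr_eq0 -lt0n.
have p0n : p`_0 != 0.
  by apply: contra pn0 => /eqP; case: hs => _ [/kerDplus_coef0_eq0 hP _] /hP ->.
set A1 := Dshift k%:R l%:R lam1; set A2 := Dshift l%:R k%:R lam2.
have [p1E] := SolTilde_coef1 hs.
move/eqP; rewrite -/A1 -/A2 mulf_eq0 (negbTE p0n) orbF addr_eq0 => /eqP hA1k.
have hA1 : A1 = - (A2 * l%:R) / k%:R by rewrite -hA1k mulfK.
(* With p_1 and A1 eliminated, the combined equation in degree 1 forces
   A2 ^+ 2 = (k / 2) ^+ 2. *)
have : (k%:R - l%:R) * l%:R * p`_0 / k%:R * ((k%:R / 2%:R) ^+ 2 - A2 ^+ 2) = 0.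
  by rewrite -[X in _ = X](SolTilde_coefS hs 0) p1E -/A1 -/A2 hA1; field.
have hkl' : k%:R - l%:R != 0 :> C by rewrite subr_eq0 eqr_nat.
move/eqP; rewrite !mulf_eq0 invr_eq0 (negbTE hkl') (negbTE hl) (negbTE p0n).
rewrite (negbTE hk) /= subr_eq0 eq_sym eqf_sqr => /orP hA2.
have [sgn hA2s] : exists sgn, A2 = (-1) ^+ sgn * (k%:R / 2%:R).
  by case: hA2 => /eqP ->; [exists false | exists true];
    rewrite /= ?expr0 ?expr1 ?mul1r ?mulN1r.
exists sgn; have [hB1 hB2] := Dshift_special sgn k l.
apply: injective_projections => /=.
  by apply: (@Dshift_inj k%:R l%:R); rewrite hB1 -/A1 hA1 hA2s; field.
by apply: (@Dshift_inj l%:R k%:R); rewrite hB2 -/A2 hA2s.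
Qed.

End SolTildeTheory.

Theorem proposition6p3 (C : numClosedFieldType) (k l : nat)
  (hk : (1 <= k)%N) (hl : (1 <= l)%N) (hkl : k != l) :
  (forall lam1 lam2 : C,
     (exists p : {poly C}, SolTilde k l lam1 lam2 p /\ p != 0) <->
     ((lam1, lam2) = (1 - k%:R, 1 - l%:R + k%:R) \/
      (lam1, lam2) = (1 - k%:R + l%:R, 1 - l%:R)))
  /\ (forall p : {poly C},
        SolTilde k l (1 - k%:R) (1 - l%:R + k%:R) p <->
        exists c : C, p = c *: ppm C false k l)
  /\ (forall p : {poly C},
        SolTilde k l (1 - k%:R + l%:R) (1 - l%:R) p <->
        exists c : C, p = c *: ppm C true k l).
Proof.
split; last by split=> p; [exact: (SolTilde_specialE false k l p hkl)
                          | exact: (SolTilde_specialE true k l p hkl)].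
move=> lam1 lam2; split.
  case=> p [hs pn0]; have [[] ->] := SolTilde_neq0_special hk hl hkl hs pn0.
    by right.
  by left.
have special_sol sgn : SolTilde k l (special_lambda sgn k l : C * C).1
                         (special_lambda sgn k l).2 (ppm C sgn k l).
  by rewrite -[ppm _ _ _ _]scale1r; apply: ppm_SolTilde.
by case=> -[-> ->]; [exists (ppm C false k l) | exists (ppm C true k l)];
  rewrite ppm_neq0; split=> //; apply: special_sol.
Qed.
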